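(* Let $X$ be an integrable real random variable ($d=1$) and let $Y_1,\ldots,Y_k\in\mathbb{R}^m$ be conditionally i.i.d. given $X$ with common conditional density $f_{Y|X}$ (joint density $f_X(x)\prod_{i=1}^k f_{Y|X}(y_i|x)$). Let $Y$ be a generic observation with $(X,Y)$ having density $f_X(x)f_{Y|X}(y|x)$, $g(y)=\mathbb{E}[X|Y=y]$, $Z=X-g(Y)$, and $D_2(k)=\mathbb{E}[\min_{1\le i\le k}(X-g(Y_i))^2]$. Assume that conditioned on $X=x$, $Z$ has a Lebesgue density $f_{Z|X}(z|x)$, and that for some $r>0$, \[ M=\sup_{x}\sup_{|z|\le r}f_{Z|X}(z|x)<\infty. \] Then for all sufficiently large $k$, \[ D_2(k)\ge e^{-2}\left(\frac{1}{2M\left(1+\frac k2\right)}\right)^2, \] so that $D_2(k)=\Omega(k^{-2})$.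
   Context: $f=\Omega(h)$ means $f(k)\ge c\,h(k)$ for some $c>0$ and all sufficiently large $k$. *)

From HB Require Import structures.
From mathcomp Require Import all_boot all_order all_algebra.
From mathcomp Require Import all_classical all_reals all_analysis.
Set Implicit Arguments. Unset Strict Implicit. Unset Printing Implicit Defensive.
Import Order.TTheory GRing.Theory Num.Theory.
Import numFieldNormedType.Exports.
Local Open Scope classical_set_scope.
Local Open Scope ring_scope.

(* Densities are w.r.t. Lebesgue
   measure on R (for X and Z) and w.r.t. a sigma-finite reference measure
   [nu] on the observation space T (Lebesgue measure on R^m in the paper). *)

Section Defs.
Variables (R : realType) (d : measure_display) (T : measurableType d).
Variable (nu : {measure set T -> \bar R}).

Fixpoint iter_int (n : nat) (F : seq T -> \bar R) : \bar R :=
  match n with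
  | 0 => F [::]
  | n'.+1 => (\int[nu]_y iter_int n' (fun s => F (y :: s)))%E
  end.

Definition post_mean (fX : R -> R) (f : R -> T -> R) (y : T) : R :=
  fine (\int[lebesgue_measure]_x (x * fX x * f x y)%:E)%E /
  fine (\int[lebesgue_measure]_x (fX x * f x y)%:E)%E.

Definition D2 (fX : R -> R) (f : R -> T -> R) (k : nat) : \bar R :=
  (\int[lebesgue_measure]_x
     ((fX x)%:E *
      iter_int k (fun s =>
        (\prod_(y <- s) f x y)%:E *
        \big[mine/+oo]_(y <- s) ((x - post_mean fX f y) ^+ 2)%:E)))%E.

(* M = sup_x sup_{|z| <= r} f_{Z|X}(z|x)   (fZ z x = f_{Z|X}(z|x)) *)
Definition Msup (fZ : R -> R -> R) (r : R) : \bar R :=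
  ereal_sup [set (fZ p.1 p.2)%:E | p in [set p : R * R | `|p.1| <= r]].

End Defs.

From HB Require Import structures.
From mathcomp Require Import all_boot all_order all_algebra.
From mathcomp Require Import all_classical all_reals all_analysis measurable_realfun.
From mathcomp Require Import ring lra.
Import Order.TTheory GRing.Theory Num.Theory.
Import numFieldNormedType.Exports.
Local Open Scope classical_set_scope.
Local Open Scope ring_scope.

(* Fix 0 < t <= r.  Given X = x, the density bound gives P(|Z| <= t | X = x)
   <= 2 M t, so by conditional independence all k errors X - g(Y_i) exceed t
   in absolute value with probability at least (1 - 2 M t)^k; hence
   D_2(k) >= t^2 (1 - 2 M t)^k.  For t = 1 / (2 M (1 + k/2)) this reads
   t^2 (1 + 2/k)^(-k) >= e^(-2) t^2. *)

Section ge0_integral_nonmeasurable.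
Context {d} {T : measurableType d} {R : realType} (mu : {measure set T -> \bar R}).
Local Open Scope ereal_scope.

(* The iterated integrands of [iter_int] are not known to be measurable, so
   integrals are compared through their definition as suprema of integrals
   of simple functions. *)
Lemma ge0_le_integralT (g h : T -> \bar R) :
  (forall y, 0 <= g y) -> (forall y, g y <= h y) ->
  \int[mu]_y g y <= \int[mu]_y h y.
Proof.
move=> g0 gh; have h0 y : 0 <= h y by exact: le_trans (g0 y) (gh y).
rewrite (ge0_integralTE mu g0) (ge0_integralTE mu h0).
apply: ereal_sup_le => _ [s /= sg <-]; exists s => //= y.
exact: le_trans (sg y) (gh y).
Qed.

Lemma ge0_integralZl_le (k : R) (h : T -> \bar R) :
  (0 <= k)%R -> (forall y, 0 <= h y) ->
  k%:E * \int[mu]_y h y <= \int[mu]_y (k%:E * h y).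
Proof.
move=> k0 h0; have kh0 y : 0 <= k%:E * h y by rewrite mule_ge0.
have [->|k_neq0] := eqVneq k 0%R.
  by rewrite mul0e; apply: integral_ge0 => y _; rewrite mul0e.
have k_gt0 : (0 < k)%R by rewrite lt0r k_neq0.
rewrite (ge0_integralTE mu h0) (ge0_integralTE mu kh0) -ereal_sup_pZl //.
apply: ereal_sup_le => _ [_ [s /= sh <-] <-].
exists (scale_nnsfun s k0); last exact: sintegralrM.
by move=> y /=; rewrite EFinM lee_wpmul2l ?lee_fin.
Qed.

End ge0_integral_nonmeasurable.

Section iter_int.
Context {R : realType} {d} {T : measurableType d} (nu : {measure set T -> \bar R}).
Local Open Scope ereal_scope.

Lemma iter_int_ge0 n (F : seq T -> \bar R) :
  (forall s, 0 <= F s) -> 0 <= iter_int nu n F.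
Proof.
elim: n F => [|n IHn] F F0 /=; first exact: F0.
by apply: integral_ge0 => y _; apply: IHn.
Qed.

Lemma le_iter_int n (F G : seq T -> \bar R) :
  (forall s, 0 <= F s) -> (forall s, F s <= G s) ->
  iter_int nu n F <= iter_int nu n G.
Proof.
elim: n F G => [|n IHn] F G F0 FG /=; first exact: FG.
apply: ge0_le_integralT => y; first exact: iter_int_ge0.
exact: IHn.
Qed.

Lemma iter_int_prod_ge (h : T -> R) (i : R) :
  (forall y, 0 <= h y)%R -> (0 <= i)%R -> i%:E <= \int[nu]_y (h y)%:E ->
  forall n (c : R), (0 <= c)%R ->
  (c * i ^+ n)%:E <= iter_int nu n (fun s => (c * \prod_(y <- s) h y)%:E).
Proof.
move=> h0 i0 hi n; elim: n => [|n IHn] c c0 /=; first by rewrite expr0 big_nil.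
have ci0 : (0 <= c * i ^+ n)%R by rewrite mulr_ge0 ?exprn_ge0.
rewrite exprSr mulrA EFinM.
apply: (le_trans (lee_wpmul2l _ hi)); first by rewrite lee_fin.
apply: (le_trans (ge0_integralZl_le nu _ _ ci0 _)) => [y|]; first by rewrite lee_fin.
apply: ge0_le_integralT => y; first by rewrite -EFinM lee_fin mulr_ge0.
under eq_fun do rewrite big_cons mulrA.
by rewrite -EFinM mulrAC; apply: IHn; rewrite mulr_ge0.
Qed.

Lemma prod_restrict_le_prod_bigmin (w : T -> R) (v : T -> \bar R) (S : set T)
    (a : R) (s : seq T) :
  (forall y, 0 <= w y)%R -> (forall y, 0 <= v y) -> (forall y, S y -> a%:E <= v y) ->
  (a * \prod_(y <- s) (if y \in S then w y else 0))%:E <=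
    (\prod_(y <- s) w y)%:E * \big[mine/+oo]_(y <- s) v y.
Proof.
move=> w0 v0 Sv.
have [sS|] := boolP (all (fun y => y \in S) s); last first.
  case/allPn => y ys yS.
  have -> : (\prod_(z <- s) (if z \in S then w z else 0) = 0)%R.
    by apply/eqP; rewrite prodf_seq_eq0; apply/hasP; exists y => //; rewrite (negbTE yS) eqxx.
  by rewrite mulr0 mule_ge0 ?lee_fin ?prodr_ge0 // le_bigmin ?leey.
rewrite (eq_big_seq w) => [|y ys]; last by rewrite (allP sS y ys).
rewrite mulrC EFinM lee_wpmul2l ?lee_fin ?prodr_ge0 // big_seq.
by apply: le_bigmin; rewrite ?leey // => y ys; apply/Sv/set_mem/(allP sS).
Qed.

End iter_int.

Lemma density_tail_ge (R : realType) (p : R -> R) (M t : R) :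
  measurable_fun setT p -> (forall z, 0 <= p z) ->
  (\int[lebesgue_measure]_z (p z)%:E = 1)%E ->
  0 < t -> (forall z, `|z| <= t -> p z <= M) ->
  ((1 - 2 * M * t)%:E <= \int[lebesgue_measure]_(z in ~` `[(- t)%R, t]) (p z)%:E)%E.
Proof.
move=> mp p0 p1 t0 pM; set I : set R := `[- t, t]%classic.
have mI : measurable I by exact: measurable_itv.
have mpE : measurable_fun setT (EFin \o p) by exact/measurable_EFinP.
have mass_I : (\int[lebesgue_measure]_(z in I) (p z)%:E <= (2 * M * t)%:E)%E.
  apply: (@le_trans _ _ (\int[lebesgue_measure]_(z in I) (cst M%:E) z)%E).
    apply: ge0_le_integral => //.
    - by move=> z _; rewrite lee_fin.
    - exact: measurable_funS mpE.
    - by move=> z; rewrite /I /= in_itv /= lee_fin -ler_norml; exact: pM.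
  have leb_I : lebesgue_measure I = (2 * t)%:E.
    rewrite (lebesgue_measure_itv `[- t, t]) /= lte_fin.
    have -> : (- t < t)%R by lra.
    by rewrite -EFinD; congr (_%:E); lra.
  rewrite integral_cst // [X in (_ * X)%E](_ : _ = (2 * t)%:E) ?leb_I //.
  by rewrite -EFinM mulrCA mulrA.
rewrite EFinB leeBlDl // -p1 -(setUv I) ge0_integral_setU //; last first.
- exact/disj_setPCl.
- by move=> z _; rewrite lee_fin.
- by rewrite setUv.
- exact: measurableC.
exact: leeD2r.
Qed.

Lemma exprDn_le_expR (R : realType) (x : R) n :
  0 <= x -> (0 < n)%N -> (1 + x / n%:R) ^+ n <= expR x.
Proof.
move=> x0 n0; have n_neq0 : n%:R != 0 :> R by rewrite pnatr_eq0 -lt0n.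
rewrite -[X in expR X](divfK n_neq0) [X in expR X]mulrC expRM_natl.
by apply: lerXn2r; rewrite ?nnegrE ?expR_ge0 ?expR_ge1Dx // addr_ge0 ?divr_ge0.
Qed.

Lemma div_sq_le_inv_sq (R : realFieldType) (c M k : R) : 0 <= c -> 0 < M -> 1 <= k ->
  c / (9 * M ^+ 2) / k ^+ 2 <= c * (1 / (2 * M * (1 + k / 2))) ^+ 2.
Proof.
move=> c0 M0 k1; have k0 : 0 < k by lra.
have den3 : 0 < 3 * M * k by rewrite !mulr_gt0.
have den2 : 0 < 2 * M * (1 + k / 2) by rewrite !mulr_gt0 ?addr_gt0 ?divr_gt0.
rewrite (_ : c / _ / _ = c * (1 / (3 * M * k)) ^+ 2); last by field; lra.
rewrite ler_wpM2l //; apply: lerXn2r.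
- by rewrite nnegrE div1r invr_ge0 ltW.
- by rewrite nnegrE div1r invr_ge0 ltW.
- by rewrite !div1r lef_pV2 ?posrE //; nra.
Qed.

Lemma archi_bound_inv_le {R : archiRealFieldType} (a : R) k :
  0 < a -> (Num.Def.archi_bound a^-1 <= k)%N -> (0 < k)%N /\ 1 <= a * k%:R.
Proof.
move=> a0 Kk; have : a^-1 < k%:R.
  apply: lt_le_trans (archi_boundP _) _; first by rewrite invr_ge0 ltW.
  by rewrite ler_nat.
rewrite -div1r ltr_pdivrMr // mulrC => ak; split; last exact: ltW.
by rewrite -(ltr0n R) -(pmulr_rgt0 _ a0) (lt_trans ltr01).
Qed.

Lemma Msup_ge0 {R : realType} {fZ : R -> R -> R} {r : R} :
  (forall x z, 0 <= fZ z x) -> 0 <= r -> (0 <= Msup fZ r)%E.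
Proof.
move=> fZ0 r0; apply: le_ereal_sup_tmp; exists (fZ 0 0)%:E; last by rewrite lee_fin.
by exists (0, 0); rewrite //= normr0.
Qed.

Lemma le_fine_Msup {R : realType} {fZ : R -> R -> R} {r : R} x z :
  (0 <= Msup fZ r)%E -> (Msup fZ r < +oo)%E -> `|z| <= r -> fZ z x <= fine (Msup fZ r).
Proof.
move=> M0 Mfin zr; rewrite -lee_fin fineK ?ge0_fin_numE //.
by apply: ereal_sup_ubound; exists (z, x).
Qed.

Section D2_lower_bound.
Context {R : realType} {d} {T : measurableType d} {nu : {measure set T -> \bar R}}.
Context {fX : R -> R} {f : R -> T -> R} {fZ : R -> R -> R}.
Hypothesis fX_ge0 : forall x, 0 <= fX x.
Hypothesis fX_mass1 : (\int[lebesgue_measure]_x (fX x)%:E = 1)%E.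
Hypothesis f_ge0 : forall x y, 0 <= f x y.
Hypothesis f_mass1 : forall x, (\int[nu]_y (f x y)%:E = 1)%E.
Hypothesis fZ_meas : forall x, measurable_fun setT (fun z => fZ z x).
Hypothesis fZ_ge0 : forall x z, 0 <= fZ z x.
Hypothesis fZ_law : forall x (A : set R), measurable A ->
  (\int[nu]_(y in [set y | A (x - post_mean fX f y)%R]) (f x y)%:E
   = \int[lebesgue_measure]_(z in A) (fZ z x)%:E)%E.

Local Notation g := (post_mean fX f).

Lemma fZ_mass1 x : (\int[lebesgue_measure]_z (fZ z x)%:E = 1)%E.
Proof. by rewrite -(f_mass1 x) -fZ_law. Qed.

Lemma iter_int_min_sq_ge x (t M : R) k :
  0 < t -> (forall z, `|z| <= t -> fZ z x <= M) -> 2 * M * t <= 1 ->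
  ((t ^+ 2 * (1 - 2 * M * t) ^+ k)%:E <= iter_int nu k (fun s =>
     (\prod_(y <- s) f x y)%:E * \big[mine/+oo]_(y <- s) ((x - g y) ^+ 2)%:E))%E.
Proof.
move=> t0 fZM Mt1.
pose A : set R := ~` `[- t, t].
pose S := [set y | A (x - g y)].
have far_S y : S y -> (t ^+ 2 <= (x - g y) ^+ 2)%R.
  rewrite /S /A /= in_itv /= -ler_norml => /negP; rewrite -ltNge => /ltW tx.
  by rewrite -(real_normK (num_real (x - g y))) ler_pXn2r // ?nnegrE ?(ltW t0).
have mass_S : ((1 - 2 * M * t)%:E <=
    \int[nu]_y (if y \in S then f x y else 0)%:E)%E.
  rewrite (eq_integral ((fun y => (f x y)%:E) \_ S)); last first.
    by move=> y _; rewrite /patch; case: ifP.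
  rewrite -integral_mkcond fZ_law; last exact: measurableC (measurable_itv _).
  exact: density_tail_ge (fZ_mass1 x) t0 fZM.
have S_ge0 y : 0 <= (if y \in S then f x y else 0) by case: ifP.
have i0 : 0 <= 1 - 2 * M * t by rewrite subr_ge0.
apply: le_trans (iter_int_prod_ge nu _ _ S_ge0 i0 mass_S k _ (sqr_ge0 t)) _.
apply: le_iter_int => s; first by rewrite lee_fin mulr_ge0 ?sqr_ge0 ?prodr_ge0 //.
by apply: prod_restrict_le_prod_bigmin => [//|y|y /far_S]; rewrite lee_fin ?sqr_ge0.
Qed.

Lemma D2_ge0 k : (0 <= D2 nu fX f k)%E.
Proof.
apply: integral_ge0 => x _; rewrite mule_ge0 ?lee_fin //.
apply: iter_int_ge0 => s; rewrite mule_ge0 ?lee_fin ?prodr_ge0 //.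
by rewrite le_bigmin ?leey // => y _; rewrite lee_fin sqr_ge0.
Qed.

Lemma D2_ge (t M : R) k :
  0 < t -> (forall x z, `|z| <= t -> fZ z x <= M) -> 2 * M * t <= 1 ->
  ((t ^+ 2 * (1 - 2 * M * t) ^+ k)%:E <= D2 nu fX f k)%E.
Proof.
move=> t0 fZM Mt1; set c := (t ^+ 2 * _)%R.
have c0 : 0 <= c by rewrite mulr_ge0 ?sqr_ge0 ?exprn_ge0 ?subr_ge0.
rewrite -[c%:E]mule1 -fX_mass1.
apply: (le_trans (ge0_integralZl_le lebesgue_measure _ _ c0 _)) => [x|]; first by rewrite lee_fin.
apply: ge0_le_integralT => x; first by rewrite -EFinM lee_fin mulr_ge0.
rewrite muleC lee_wpmul2l ?lee_fin //.
exact: iter_int_min_sq_ge t0 (fZM x) Mt1.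
Qed.

Lemma D2_ge_sq (r : R) k :
  0 < r -> (forall x z, `|z| <= r -> fZ z x <= 0) -> ((r ^+ 2)%:E <= D2 nu fX f k)%E.
Proof.
move=> r0 fZ_r0; have := D2_ge r 0 k r0 fZ_r0.
by rewrite mulr0 mul0r ler01 subr0 expr1n mulr1; apply.
Qed.

Lemma D2_ge_expR (M r : R) k :
  0 < M -> (forall x z, `|z| <= r -> fZ z x <= M) ->
  (0 < k)%N -> 1 <= M * r * k%:R ->
  ((expR (-2) * (1 / (2 * M * (1 + k%:R / 2))) ^+ 2)%:E <= D2 nu fX f k)%E.
Proof.
move=> M0 fZM k0 Mrk; have k_gt0 : 0 < k%:R :> R by rewrite ltr0n.
set t := 1 / (2 * M * (1 + k%:R / 2)).
have t0 : 0 < t by rewrite divr_gt0 ?mulr_gt0 ?addr_gt0 ?divr_gt0.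
have tr : t <= r by rewrite ler_pdivrMr ?mulr_gt0 ?addr_gt0 ?divr_gt0 //; nra.
have Mt : 1 - 2 * M * t = (1 + 2 / k%:R)^-1 by rewrite /t; field; lra.
have Mt1 : 2 * M * t <= 1.
  by rewrite -subr_ge0 Mt invr_ge0 addr_ge0 ?divr_ge0 ?ltW.
apply: (le_trans _ (D2_ge _ _ k t0 _ Mt1)); last by move=> x z zt; apply/fZM/(le_trans zt).
rewrite lee_fin mulrC ler_wpM2l ?sqr_ge0 // Mt exprVn expRN.
rewrite lef_pV2 ?posrE ?expR_gt0 ?exprn_gt0 ?addr_gt0 ?divr_gt0 //.
exact: exprDn_le_expR.
Qed.

End D2_lower_bound.

Theorem corollary3 (R : realType) (d : measure_display) (T : measurableType d)
  (nu : {measure set T -> \bar R}) (fX : R -> R) (f : R -> T -> R)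
  (fZ : R -> R -> R) (r : R) :
  sigma_finite setT nu ->
  (* fX is a probability density of X on R *)
  measurable_fun setT fX ->
  (forall x, 0 <= fX x) ->
  (\int[lebesgue_measure]_x (fX x)%:E = 1)%E ->
  (* X is integrable *)
  lebesgue_measure.-integrable setT (fun x => (x * fX x)%:E) ->
  (* f(.|x) is a conditional density of Y given X = x, jointly measurable *)
  measurable_fun setT (fun p : R * T => f p.1 p.2) ->
  (forall x y, 0 <= f x y) ->
  (forall x, (\int[nu]_y (f x y)%:E = 1)%E) ->
  (* conditioned on X = x, Z = X - g(Y) has Lebesgue density fZ(.|x) *)
  (forall x, measurable_fun setT (fun z => fZ z x)) ->
  (forall x z, 0 <= fZ z x) ->
  (forall x (A : set R), measurable A ->
     (\int[nu]_(y in [set y | A (x - post_mean fX f y)%R]) (f x y)%:E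
      = \int[lebesgue_measure]_(z in A) (fZ z x)%:E)%E) ->
  0 < r ->
  (Msup fZ r < +oo)%E ->
  (exists K : nat, forall k : nat, (K <= k)%N ->
     ((expR (-2)) * (1 / (2 * fine (Msup fZ r) * (1 + k%:R / 2))) ^+ 2)%:E
       <= D2 nu fX f k)%E
  /\
  (exists c : R, 0 < c /\ exists K : nat, forall k : nat, (K <= k)%N ->
     ((c / k%:R ^+ 2)%:E <= D2 nu fX f k)%E).
Proof.
move=> _ _ fX0 fX1 _ _ f0 f1 fZ_meas fZ0 fZ_law r0 Msup_fin.
have D2_ge_sq := D2_ge_sq fX0 fX1 f0 f1 fZ_meas fZ0 fZ_law.
have D2_ge_expR := D2_ge_expR fX0 fX1 f0 f1 fZ_meas fZ0 fZ_law.
have Msup0 : (0 <= Msup fZ r)%E := Msup_ge0 fZ0 (ltW r0).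
set M := fine (Msup fZ r).
have fZM x z : `|z| <= r -> fZ z x <= M := le_fine_Msup x z Msup0 Msup_fin.
have [M_gt0|M_le0] := ltrP 0 M; last first.
  have M0 : M = 0 by apply/le_anti; rewrite M_le0 fine_ge0.
  rewrite M0 in fZM; split.
    by exists 0%N => k _; rewrite M0 mulr0 mul0r div1r invr0 expr0n mulr0 D2_ge0.
  exists (r ^+ 2); split; first exact: exprn_gt0.
  exists 1%N => k k1; apply: (le_trans _ (D2_ge_sq r k r0 fZM)); rewrite lee_fin.
  by rewrite ler_pdivrMr ?exprn_gt0 ?ltr0n // ler_peMr ?sqr_ge0 ?exprn_ege1 ?ler1n.
have Mr0 : 0 < M * r by rewrite mulr_gt0.
pose K := Num.Def.archi_bound (M * r)^-1.
split; first by exists K => k /(archi_bound_inv_le _ _ Mr0) [k0]; exact: D2_ge_expR.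
exists (expR (-2) / (9 * M ^+ 2)); split.
  by rewrite divr_gt0 ?expR_gt0 ?mulr_gt0 ?exprn_gt0.
exists K => k /(archi_bound_inv_le _ _ Mr0) [k0 Mrk].
apply: (le_trans _ (D2_ge_expR M r k M_gt0 fZM k0 Mrk)).
by rewrite lee_fin div_sq_le_inv_sq ?expR_ge0 ?ler1n.
Qed.
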